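(* Let $(F; +, \cdot, <)$ be an ordered field such that $T = \mathrm{Th}(F;+,\cdot,<)$ is dp-small. Then every positive element of $F$ has an $n$th root in $F$ for every positive integer $n$.
   Context: For a complete theory $T$ in language $L$ with monster model $\mathcal{U}$ ($\mathcal{U}_y$ the $|y|$-tuples from $\mathcal{U}$): a partial type $\pi(x)$ is dp-small if there do not exist $L(\mathcal{U})$-formulas $\varphi_i(x)$ ($i<\omega$), an $L$-formula $\psi(x;y)$ and $b_j\in\mathcal{U}_y$ ($j<\omega$) such that for all $i_0,j_0<\omega$ the type $\pi(x)\cup\{\varphi_{i_0}(x),\psi(x;b_{j_0})\}\cup\{\neg\varphi_i(x): i\ne i_0\}\cup\{\neg\psi(x;b_j): j\neq j_0\}$ is consistent. $T$ is dp-small if $x=x$ is dp-small for $x$ a single variable. *)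

From mathcomp Require Import all_boot all_order all_algebra.
Set Implicit Arguments. Unset Strict Implicit. Unset Printing Implicit Defensive.
Import Order.TTheory GRing.Theory Num.Theory.

Record Lstruct := LStruct {
  car :> Type;
  s_add : car -> car -> car;
  s_mul : car -> car -> car;
  s_lt  : car -> car -> Prop }.

Inductive term : Type :=
  | TVar of nat
  | TAdd of term & term
  | TMul of term & term.

Inductive formula : Type :=
  | FEq  of term & term
  | FLt  of term & term
  | FNeg of formula
  | FAnd of formula & formula
  | FEx  of nat & formula.

Definition upd (M : Type) (e : nat -> M) (n : nat) (a : M) : nat -> M :=
  fun k => if k == n then a else e k.

Fixpoint teval (M : Lstruct) (e : nat -> M) (t : term) : M :=
  match t with
  | TVar n => e n
  | TAdd t1 t2 => s_add (teval e t1) (teval e t2)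
  | TMul t1 t2 => s_mul (teval e t1) (teval e t2)
  end.

Fixpoint sat (M : Lstruct) (e : nat -> M) (f : formula) : Prop :=
  match f with
  | FEq t1 t2 => teval e t1 = teval e t2
  | FLt t1 t2 => s_lt (teval e t1) (teval e t2)
  | FNeg g => ~ sat e g
  | FAnd g h => sat e g /\ sat e h
  | FEx n g => exists a : M, sat (upd e n a) g
  end.

Fixpoint tfv (t : term) : seq nat :=
  match t with
  | TVar n => [:: n]
  | TAdd t1 t2 => tfv t1 ++ tfv t2
  | TMul t1 t2 => tfv t1 ++ tfv t2
  end.

Fixpoint fv (f : formula) : seq nat :=
  match f with
  | FEq t1 t2 => tfv t1 ++ tfv t2
  | FLt t1 t2 => tfv t1 ++ tfv t2
  | FNeg g => fv g
  | FAnd g h => fv g ++ fv h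
  | FEx n g => [seq k <- fv g | k != n]
  end.

Definition sentence (f : formula) : Prop := fv f = [::].

Definition struct_of (R : realFieldType) : Lstruct :=
  @LStruct R (fun x y => x + y)%R (fun x y => x * y)%R (fun x y => (x < y)%R).

(* M (nonempty, witnessed by m0) is a model of Th(F), i.e. M is elementarily
   equivalent to F. *)
Definition models_Th (R : realFieldType) (M : Lstruct) (m0 : M) : Prop :=
  forall f : formula, sentence f ->
    (sat (M := struct_of R) (fun _ => 0%R) f <-> sat (fun _ => m0) f).

(* A dp-small witness configuration in a model M of T: L(M)-formulas
   phi_i(x) (formula phi i, parameters pe i for the variables other than x = 0),
   an L-formula psi(x;y) and parameter tuples b_j (valuations of the y-variables),
   such that every type
     {phi_i0(x), psi(x;b_j0)} u {~phi_i(x) : i <> i0} u {~psi(x;b_j) : j <> j0}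
   is consistent with the elementary diagram of M, i.e. finitely satisfiable in M. *)
Definition dp_config (M : Lstruct) : Prop :=
  exists (phi : nat -> formula) (pe : nat -> nat -> M)
         (psi : formula) (b : nat -> nat -> M),
    forall i0 j0 N : nat, exists a : M,
      [/\ sat (upd (pe i0) 0 a) (phi i0),
          sat (upd (b j0) 0 a) psi,
          (forall i, (i < N)%N -> i <> i0 -> ~ sat (upd (pe i) 0 a) (phi i)) &
          (forall j, (j < N)%N -> j <> j0 -> ~ sat (upd (b j) 0 a) psi)].

(* Th(F; +, *, <) is dp-small: no model of the theory carries such a
   configuration (equivalently, the monster model does not). *)
Definition dp_small_Th (R : realFieldType) : Prop :=
  forall (M : Lstruct) (m0 : M), models_Th R m0 -> ~ dp_config M.

From mathcomp Require Import all_boot all_order all_algebra.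
From mathcomp Require Import boolp classical_sets filter zify.
Import Order.TTheory GRing.Theory Num.Theory.
Set Implicit Arguments. Unset Strict Implicit. Unset Printing Implicit Defensive.
Local Open Scope classical_set_scope.
Local Open Scope ring_scope.

(* Suppose c > 1 has no n-th root (n > 1).  For i < N, the element
   c ^ (j n^N + n^i) of F is an (n^k)-th power exactly when k <= i, and it lies
   strictly between c ^ (j n^N) and c ^ ((j+1) n^N).  Letting N grow in an
   ultrapower of F over a nonprincipal ultrafilter, the formulas "x is an
   (n^i)-th power but not an (n^(i+1))-th power" and the intervals
   (c ^ (j n^N), c ^ ((j+1) n^N)) become an independent array of two rows of
   definable sets, so Th(F) is not dp-small; Los's theorem makes the
   ultrapower a model of Th(F). *)

Section Ultrapower.
Variables (I : Type) (M : Lstruct) (U : set_system I).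
Hypothesis U_ultra : UltraFilter U.
#[local] Instance U_proper : ProperFilter U := ultra_proper.

Definition ueq (f g : I -> M) : Prop := U [set i | f i = g i].

Lemma ueq_refl f : ueq f f.
Proof. exact: filterS filterT. Qed.

Lemma ueq_sym f g : ueq f g -> ueq g f.
Proof. exact: filterS. Qed.

Lemma ueq_trans f g h : ueq f g -> ueq g h -> ueq f h.
Proof. by move=> fg gh; apply: filterS (filterI fg gh) => i [/= -> ->]. Qed.

Definition ucar : Type := {A : set (I -> M) | exists f, A = ueq f}.

Definition ucls (f : I -> M) : ucar := exist _ (ueq f) (ex_intro _ f erefl).

Definition urep (x : ucar) : I -> M := projT1 (cid (proj2_sig x)).

Lemma ucar_inj (x y : ucar) : sval x = sval y -> x = y.
Proof.
by case: x y => A HA [B HB] /= AB; subst B; congr exist; exact: Prop_irrelevance.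
Qed.

Lemma ucls_urep x : ucls (urep x) = x.
Proof. by apply: ucar_inj; rewrite /urep; case: cid. Qed.

Lemma ucls_eq f g : ucls f = ucls g <-> ueq f g.
Proof.
split=> [/(congr1 sval) /= fg | fg].
  by apply: ueq_sym; rewrite -fg; exact: ueq_refl.
apply: ucar_inj; apply/funext => h; apply/propext.
by split; [exact: ueq_trans (ueq_sym fg) | exact: ueq_trans fg].
Qed.

Lemma ueq_urep f : ueq (urep (ucls f)) f.
Proof. by apply/ucls_eq; rewrite ucls_urep. Qed.

Definition uadd (x y : ucar) : ucar := ucls (fun i => s_add (urep x i) (urep y i)).
Definition umul (x y : ucar) : ucar := ucls (fun i => s_mul (urep x i) (urep y i)).
Definition ult (x y : ucar) : Prop := U [set i | s_lt (urep x i) (urep y i)].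

Definition ultrapower : Lstruct := LStruct uadd umul ult.

Lemma ueq_pointwise (op : M -> M -> M) f g :
  ueq (fun i => op (urep (ucls f) i) (urep (ucls g) i)) (fun i => op (f i) (g i)).
Proof. by apply: filterS (filterI (ueq_urep f) (ueq_urep g)) => i [/= -> ->]. Qed.

Lemma ult_ucls f g : ult (ucls f) (ucls g) <-> U [set i | s_lt (f i) (g i)].
Proof.
by split=> fg; apply: filterS (filterI fg (filterI (ueq_urep f) (ueq_urep g)));
  move=> i [/=]; [move=> + [<- <-] | move=> + [-> ->]].
Qed.

Lemma ultra_not (A : set I) : ~ U A <-> U [set i | ~ A i].
Proof.
split=> [|nA A_in]; first by case: (in_ultra_setVsetC A U_ultra).
apply: (filter_not_empty U); rewrite -(setICl A); exact: filterI.
Qed.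

Lemma teval_ultrapower (E : nat -> I -> M) t :
  teval (M := ultrapower) (fun k => ucls (E k)) t =
  ucls (fun i => teval (fun k => E k i) t).
Proof.
elim: t => [//|t1 IH1 t2 IH2|t1 IH1 t2 IH2] /=; rewrite IH1 IH2;
  exact/ucls_eq/ueq_pointwise.
Qed.

Lemma upd_ucls (E : nat -> I -> M) m h :
  upd (fun k => ucls (E k)) m (ucls h) = (fun k => ucls (upd E m h k)).
Proof. by apply/funext => k; rewrite /upd; case: (k == m). Qed.

Lemma upd_at (E : nat -> I -> M) m h i :
  (fun k => upd E m h k i) = upd (fun k => E k i) m (h i).
Proof. by apply/funext => k; rewrite /upd; case: (k == m). Qed.

Theorem sat_ultrapower f (E : nat -> I -> M) :
  sat (M := ultrapower) (fun k => ucls (E k)) f <->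
  U [set i | sat (fun k => E k i) f].
Proof.
elim: f E => [t1 t2|t1 t2|g IH|g IHg h IHh|m g IH] E /=.
- by rewrite !teval_ultrapower; exact: ucls_eq.
- by rewrite !teval_ultrapower; exact: ult_ucls.
- by rewrite IH; exact: ultra_not.
- rewrite IHg IHh; split=> [[Ug Uh]|Ugh]; first exact: filterI.
  by split; apply: filterS Ugh => i [].
- split=> [[a]|Uex].
    rewrite -(ucls_urep a) upd_ucls IH; apply: filterS => i /= sat_i.
    by exists (urep a i); rewrite -upd_at.
  (* a witness of some coordinate supplies the default value of the choice *)
  have [i0 [a0 _]] := filter_ex Uex.
  pose h i := if pselect (exists a, sat (upd (fun k => E k i) m a) g) is left ex
              then projT1 (cid ex) else a0.
  exists (ucls h); rewrite upd_ucls IH; apply: filterS Uex => i /= ex_i.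
  by rewrite upd_at /h; case: pselect => // ex; exact: projT2 (cid ex).
Qed.

Corollary sat_ultrapower_upd (E : nat -> I -> M) m h f :
  sat (M := ultrapower) (upd (fun k => ucls (E k)) m (ucls h)) f <->
  U [set i | sat (upd (fun k => E k i) m (h i)) f].
Proof.
rewrite upd_ucls sat_ultrapower.
by split; apply: filterS => i /=; rewrite upd_at.
Qed.

Corollary not_sat_ultrapower_upd (E : nat -> I -> M) m h f :
  ~ sat (M := ultrapower) (upd (fun k => ucls (E k)) m (ucls h)) f <->
  U [set i | ~ sat (upd (fun k => E k i) m (h i)) f].
Proof. exact: sat_ultrapower_upd E m h (FNeg f). Qed.

Corollary sat_ultrapower_const (e : nat -> M) f :
  sat (M := ultrapower) (fun k => ucls (fun _ => e k)) f <-> sat e f.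
Proof.
rewrite sat_ultrapower; split=> [Ue|e_f]; last exact: filterS filterT.
apply: contrapT => not_e; apply: (filter_not_empty U).
by apply: filterS Ue => i /=; exact: not_e.
Qed.

End Ultrapower.

Lemma ultrapower_models_Th (R : realFieldType) (I : Type) (U : set_system I) :
  UltraFilter U ->
  @models_Th R (ultrapower (struct_of R) U) (ucls (M := struct_of R) U (fun _ => 0)).
Proof. by move=> U_ultra f _; rewrite sat_ultrapower_const. Qed.

Definition is_power (R : pzRingType) (x : R) (m : nat) : Prop := exists y : R, y ^+ m = x.

Lemma is_powerV (F : fieldType) (x : F) n : is_power x^-1 n -> is_power x n.
Proof. by case=> y yn; exists y^-1; rewrite exprVn yn invrK. Qed.

Lemma normrX_eq_of_exprM (R : realDomainType) (z c : R) (n p : nat) :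
  (0 < p)%N -> 0 <= c -> z ^+ (n * p) = c ^+ p -> `|z| ^+ n = c.
Proof.
move=> p_gt0 c_ge0 zc; apply/eqP.
by rewrite -(eqrXn2 p_gt0) ?exprn_ge0 // -exprM -normrX zc ger0_norm ?exprn_ge0.
Qed.

Lemma is_power_exp_valuation (F : realFieldType) (c : F) (n j i N k : nat) :
  (0 < n)%N -> 0 < c -> ~ is_power c n -> (i < N)%N ->
  is_power (c ^+ (j * n ^ N + n ^ i)) (n ^ k) <-> (k <= i)%N.
Proof.
move=> n_gt0 c_gt0 c_not_root i_lt_N; split=> [[y yk]|k_le_i]; last first.
  exists (c ^+ (j * n ^ (N - k) + n ^ (i - k))); rewrite -exprM mulnDl -mulnA -!expnD.
  by rewrite !subnK // (leq_trans k_le_i (ltnW i_lt_N)).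
rewrite leqNgt; apply/negP => i_lt_k; apply: c_not_root.
have c_neq0 : c ^+ (j * n ^ (N - i.+1)) != 0 by rewrite expf_neq0 ?gt_eqF.
(* dividing out c ^+ (j * n ^ N) leaves an (n ^ i.+1)-th power equal to c ^+ (n ^ i) *)
pose z := y ^+ (n ^ (k - i.+1)) / c ^+ (j * n ^ (N - i.+1)).
have zc : z ^+ (n * n ^ i) = c ^+ (n ^ i).
  rewrite -expnS expr_div_n -!exprM -mulnA -!expnD !subnK // yk exprD.
  by rewrite mulrAC divff ?mul1r // expf_neq0 ?gt_eqF.
by exists `|z|; apply: normrX_eq_of_exprM zc; rewrite ?expn_gt0 ?n_gt0 ?ltW.
Qed.

Lemma ltn_mul_bracket (j j0 m r : nat) : (0 < r < m)%N ->
  (j * m < j0 * m + r)%N /\ (j0 * m + r < j.+1 * m)%N <-> j = j0.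
Proof.
case/andP=> r_gt0 r_lt_m; rewrite !mulSn; split=> [[lo hi]|->]; last lia.
have [j_lt|j_gt|//] := ltngtP j j0.
  have : (j.+1 * m <= j0 * m)%N by rewrite leq_mul2r j_lt orbT.
  by rewrite mulSn; lia.
have : (j0.+1 * m <= j * m)%N by rewrite leq_mul2r j_gt orbT.
by rewrite mulSn; lia.
Qed.

Fixpoint tpowS (t : term) (k : nat) : term :=
  if k is k'.+1 then TMul (tpowS t k') t else t.

Definition power_formula (k : nat) : formula :=
  FEx 1 (FEq (tpowS (TVar 1) k.-1) (TVar 0)).

Definition exact_power_formula (n i : nat) : formula :=
  FAnd (power_formula (n ^ i)) (FNeg (power_formula (n ^ i.+1))).

Definition interval_formula : formula :=
  FAnd (FLt (TVar 1) (TVar 0)) (FLt (TVar 0) (TVar 2)).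

Lemma teval_tpowS (R : realFieldType) (e : nat -> R) t k :
  teval (M := struct_of R) e (tpowS t k) = teval (M := struct_of R) e t ^+ k.+1.
Proof. by elim: k => [|k IH] /=; rewrite ?expr1 // IH -exprSr. Qed.

Lemma sat_power_formula (R : realFieldType) (e : nat -> R) k : (0 < k)%N ->
  sat (M := struct_of R) e (power_formula k) <-> is_power (e 0%N) k.
Proof.
by move=> k_gt0; split=> -[y yk]; exists y; move: yk => /=; rewrite teval_tpowS prednK.
Qed.

Lemma sat_exact_power_formula (R : realFieldType) (e : nat -> R) n i : (0 < n)%N ->
  sat (M := struct_of R) e (exact_power_formula n i) <->
  is_power (e 0%N) (n ^ i) /\ ~ is_power (e 0%N) (n ^ i.+1).
Proof. by move=> n_gt0; rewrite -!sat_power_formula ?expn_gt0 ?n_gt0. Qed.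

Lemma sat_interval_formula (R : realFieldType) (e : nat -> R) :
  sat (M := struct_of R) e interval_formula <-> e 1%N < e 0%N < e 2%N.
Proof. by rewrite -(rwP andP). Qed.

Section PowerPattern.
Variables (F : realFieldType) (c : F) (n : nat).
Hypotheses (c_gt1 : 1 < c) (n_gt1 : (1 < n)%N) (c_not_root : ~ is_power c n).

Definition pattern_point (j i N : nat) : F := c ^+ (j * n ^ N + n ^ i).

Definition interval_ends (j N : nat) : nat -> F := fun k =>
  if k == 1%N then c ^+ (j * n ^ N) else if k == 2%N then c ^+ (j.+1 * n ^ N) else 0.

Let n_gt0 : (0 < n)%N. Proof. exact: ltnW. Qed.

Lemma sat_exact_power_pattern_point j i0 i N : (i0 < N)%N ->
  sat (M := struct_of F) (upd (fun _ => 0) 0 (pattern_point j i0 N))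
    (exact_power_formula n i) <-> i = i0.
Proof.
move=> i0_lt_N; rewrite sat_exact_power_formula // /upd /= /pattern_point.
rewrite !is_power_exp_valuation ?(lt_trans ltr01) //.
by split=> [[]|->]; lia.
Qed.

Lemma sat_interval_pattern_point j0 i0 j N : (i0 < N)%N ->
  sat (M := struct_of F) (upd (interval_ends j N) 0 (pattern_point j0 i0 N))
    interval_formula <-> j = j0.
Proof.
move=> i0_lt_N; rewrite sat_interval_formula /upd /interval_ends /pattern_point /=.
rewrite !ltr_eXn2l // -(rwP andP).
by apply: ltn_mul_bracket; rewrite expn_gt0 n_gt0 ltn_exp2l.
Qed.

Variable U : set_system nat.
Hypotheses (U_ultra : UltraFilter U) (U_cofinite : eventually `<=` U).

Lemma power_pattern_dp_config : dp_config (ultrapower (struct_of F) U).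
Proof.
have U_from i0 (P : set nat) : (forall N, (i0 < N)%N -> P N) -> U P.
  by move=> PN; apply: U_cofinite; exists i0.+1.
exists (exact_power_formula n), (fun _ _ => ucls (M := struct_of F) U (fun _ => 0)),
  interval_formula, (fun j k => ucls (M := struct_of F) U (fun N => interval_ends j N k)).
move=> i0 j0 bound; exists (ucls (M := struct_of F) U (pattern_point j0 i0)); split.
- apply/sat_ultrapower_upd => //; apply: (U_from i0) => N i0_lt_N.
  exact/sat_exact_power_pattern_point.
- apply/sat_ultrapower_upd => //; apply: (U_from i0) => N i0_lt_N.
  exact/sat_interval_pattern_point.
- move=> i _ i_neq_i0; apply/not_sat_ultrapower_upd => //.
  apply: (U_from i0) => N i0_lt_N.
  by move/(sat_exact_power_pattern_point _ _ i0_lt_N).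
- move=> j _ j_neq_j0; apply/not_sat_ultrapower_upd => //.
  apply: (U_from i0) => N i0_lt_N.
  by move/(sat_interval_pattern_point _ _ i0_lt_N).
Qed.

End PowerPattern.

Theorem theorem1p6 (F : realFieldType) (Hdp : dp_small_Th F) :
  forall (x : F), 0 < x -> forall n : nat, (0 < n)%N -> exists y : F, y ^+ n = x.
Proof.
move=> x x_gt0 n n_gt0; apply: contrapT => x_not_root.
have n_gt1 : (1 < n)%N.
  by case: n n_gt0 x_not_root => [|[|n]] // _ []; exists x; rewrite expr1.
wlog x_gt1 : x x_gt0 x_not_root / 1 < x => [gen|].
  have [x_lt1|/gen|x_eq1] := ltgtP x 1; [|exact|].
  - apply: (gen x^-1); [by rewrite invr_gt0 | by move/is_powerV | by rewrite invf_gt1].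
  - by apply: x_not_root; exists 1; rewrite x_eq1 expr1n.
have [U [U_ultra U_cofinite]] := ultraFilterLemma eventually_filter.
apply: Hdp (@ultrapower_models_Th F nat U U_ultra) _.
exact (power_pattern_dp_config x_gt1 n_gt1 x_not_root U_ultra U_cofinite).
Qed.
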